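(* In the standing setup, let $n\ge1$, let $I$ be a nonempty subset of $\{1,\dots,n\}$, and set $\delta:=\max\{|t_i-t_j|:i,j\in I\}$. Then $$\Big\|\frac1n\sum_{k=1}^n x_k\Big\|\ge\frac{\#I}{n}\,\rho_\infty\exp(-\delta^2/2)>0.$$
   Context: Standing setup. $X$ is a real Hilbert space. $u\colon[0,\infty)\to X$ satisfies $\langle u(s),u(t)\rangle=\exp(-(s-t)^2)$ for all $s,t\ge0$. $(d_n)_{n\ge1}$ satisfies: $d_n>0$, $\sum_k d_k^2<\infty$, $t_n:=\sum_{k=1}^{n-1}d_k\to+\infty$, $d_1\le1/8$, $d_{n+1}\le d_n/(1+64d_n^2)$ for all $n$. $\rho_1:=1$, $\rho_{n+1}:=\rho_n\exp(-d_n^2)$, $\rho_\infty:=\exp(-\sum_k d_k^2)$, $x_n:=\rho_nu(t_n)$. $\#I$ is the cardinality of $I$. *)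

From HB Require Import structures.
From mathcomp Require Import all_boot all_order all_algebra.
From mathcomp Require Import all_classical all_reals all_analysis.
Set Implicit Arguments. Unset Strict Implicit. Unset Printing Implicit Defensive.
Import Order.TTheory GRing.Theory Num.Theory.
Local Open Scope ring_scope.

Definition is_inner_product (R : realType) (V : lmodType R) (ip : V -> V -> R) :=
  [/\ (forall (a : R) (x y z : V), ip (a *: x + y) z = a * ip x z + ip y z),
      (forall x y : V, ip x y = ip y x),
      (forall x : V, 0 <= ip x x) &
      (forall x : V, ip x x = 0 -> x = 0)].

Definition ipnorm (R : realType) (V : lmodType R) (ip : V -> V -> R) (v : V) : R :=
  Num.sqrt (ip v v).

Definition tt (R : realType) (d : nat -> R) (n : nat) : R :=
  \sum_(1 <= k < n) d k.

Definition rho (R : realType) (d : nat -> R) (n : nat) : R :=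
  \prod_(1 <= k < n) expR (- (d k ^+ 2)).

Definition rho_inf (R : realType) (d : nat -> R) : R :=
  expR (- \big[+%R/0%R]_(1 <= k <oo) (d k ^+ 2)).

Definition xx (R : realType) (V : lmodType R) (u : R -> V) (d : nat -> R) (n : nat) : V :=
  rho d n *: u (tt d n).

(* completeness of V for the norm induced by ip (so (V, ip) is a real Hilbert space) *)
Definition ip_complete (R : realType) (V : lmodType R) (ip : V -> V -> R) :=
  forall f : nat -> V,
    (forall e : R, 0 < e -> exists N : nat, forall m k : nat, (N <= m)%N -> (N <= k)%N ->
        ipnorm ip (f m - f k) < e) ->
    exists v : V, forall e : R, 0 < e -> exists N : nat, forall m : nat, (N <= m)%N ->
        ipnorm ip (f m - v) < e.

From HB Require Import structures.
From mathcomp Require Import all_boot all_order all_algebra.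
From mathcomp Require Import all_classical all_reals all_analysis.
From mathcomp Require Import lra.
Set Implicit Arguments. Unset Strict Implicit. Unset Printing Implicit Defensive.
Import Order.TTheory GRing.Theory Num.Theory.
Local Open Scope classical_set_scope.
Local Open Scope ring_scope.

(* All Gram coefficients <x_k, x_l> = rho_k rho_l exp(-(t_k - t_l)^2) are
   nonnegative, so ||sum_k x_k||^2 is at least the sum over I x I, and there
   each coefficient is at least (rho_oo exp(-delta^2/2))^2. *)

Lemma card_sqr_le_double_sum (R : numDomainType) (T : finType) (A : {set T})
    (F : T -> T -> R) (c : R) :
  (forall i j, 0 <= F i j) -> (forall i j, i \in A -> j \in A -> c <= F i j) ->
  #|A|%:R ^+ 2 * c <= \sum_i \sum_j F i j.
Proof.
move=> F_ge0 F_ge.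
have sub_sum (G : T -> R) : (forall i, 0 <= G i) -> \sum_(i in A) G i <= \sum_i G i.
  by move=> G_ge0; rewrite [leRHS](bigID (mem A)) /= lerDl sumr_ge0.
apply: le_trans (sub_sum _ _); last by move=> i; apply: sumr_ge0.
have -> : #|A|%:R ^+ 2 * c = \sum_(i in A) \sum_(j in A) c.
  by rewrite !sumr_const -mulrnA mulnn mulrC -natrX mulr_natr.
apply: ler_sum => i iA; apply: le_trans (sub_sum _ (F_ge0 i)).
by apply: ler_sum => j jA; exact: F_ge.
Qed.

Section InnerProduct.
Variables (R : realType) (V : lmodType R) (ip : V -> V -> R).
Hypothesis ip_inner : is_inner_product ip.

Lemma ipDl (x y z : V) : ip (x + y) z = ip x z + ip y z.
Proof.
by case: ip_inner => lin _ _ _; have := lin 1 x y z; rewrite scale1r mul1r.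
Qed.

Lemma ip0l (z : V) : ip 0 z = 0.
Proof. by apply: (addrI (ip 0 z)); rewrite -ipDl !addr0. Qed.

Lemma ipZl (a : R) (x z : V) : ip (a *: x) z = a * ip x z.
Proof. by case: ip_inner => lin _ _ _; rewrite -[a *: x]addr0 lin ip0l addr0. Qed.

Lemma ipZr (a : R) (x z : V) : ip z (a *: x) = a * ip z x.
Proof. by case: ip_inner => _ sym _ _; rewrite sym ipZl sym. Qed.

Lemma ip_suml (T : Type) (r : seq T) (P : pred T) (f : T -> V) (z : V) :
  ip (\sum_(i <- r | P i) f i) z = \sum_(i <- r | P i) ip (f i) z.
Proof. exact: (big_morph (ip^~ z) (fun x y => ipDl x y z) (ip0l z)). Qed.

Lemma ip_sumr (T : Type) (r : seq T) (P : pred T) (f : T -> V) (z : V) :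
  ip z (\sum_(i <- r | P i) f i) = \sum_(i <- r | P i) ip z (f i).
Proof.
case: ip_inner => _ sym _ _.
by rewrite sym ip_suml; apply: eq_bigr => i _; rewrite sym.
Qed.

Lemma ipnormZ (a : R) (v : V) : ipnorm ip (a *: v) = `|a| * ipnorm ip v.
Proof. by rewrite /ipnorm ipZl ipZr mulrA -expr2 sqrtrM ?sqr_ge0 // sqrtr_sqr. Qed.

Lemma ipnorm_ge (c : R) (v : V) : 0 <= c -> c ^+ 2 <= ip v v -> c <= ipnorm ip v.
Proof.
move=> c_ge0 cv; rewrite /ipnorm -(ger0_norm c_ge0) -sqrtr_sqr ler_sqrt //.
exact: le_trans (sqr_ge0 c) cv.
Qed.

Lemma ipnorm_sum_ge (T : finType) (A : {set T}) (x : T -> V) (c : R) :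
  0 <= c -> (forall i j, 0 <= ip (x i) (x j)) ->
  (forall i j, i \in A -> j \in A -> c ^+ 2 <= ip (x i) (x j)) ->
  #|A|%:R * c <= ipnorm ip (\sum_i x i).
Proof.
move=> c_ge0 ip_ge0 ip_ge; apply: ipnorm_ge; first by rewrite mulr_ge0.
rewrite ip_suml exprMn; under eq_bigr do rewrite ip_sumr.
exact: card_sqr_le_double_sum.
Qed.

End InnerProduct.

Lemma le_bigmax2_cond (d : Order.disp_t) (T : orderType d) (I : finType)
    (A : {pred I}) (x : T) (F : I -> I -> T) (i j : I) :
  i \in A -> j \in A ->
  (F i j <= \big[Order.max/x]_(k in A) \big[Order.max/x]_(l in A) F k l)%O.
Proof.
move=> iA jA; apply: le_trans (le_bigmax_cond _ _ iA).
exact: (le_bigmax_cond _ (F i) jA).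
Qed.

Lemma expR_half_sqr_le (R : realType) (a b : R) :
  `|a| <= b -> expR (- (b ^+ 2) / 2) ^+ 2 <= expR (- (a ^+ 2)).
Proof.
move=> ab; rewrite -expRM_natl ler_expR.
have : a ^+ 2 <= b ^+ 2.
  by rewrite -real_normK ?num_real // ler_sqr ?nnegrE // (le_trans _ ab).
lra.
Qed.

Section Sequence.
Variables (R : realType) (d : nat -> R).

Lemma rho_gt0 k : 0 < rho d k.
Proof. by apply: prodr_gt0 => i _; exact: expR_gt0. Qed.

Lemma rho_inf_le_rho k :
  cvgn [sequence \sum_(1 <= k < n) (d k ^+ 2)]_n -> rho_inf d <= rho d k.
Proof.
move=> dsq_cvg; rewrite /rho_inf /rho -expR_sum sumrN ler_expR lerN2.
apply: (nondecreasing_cvgn_le _ dsq_cvg) => a b ab /=.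
case: (leqP a 1) => a1.
  by rewrite [leLHS]big_geq // sumr_ge0 // => i _; exact: sqr_ge0.
rewrite [leRHS](big_cat_nat (ltnW a1) ab) /= lerDl.
by apply: sumr_ge0 => i _; exact: sqr_ge0.
Qed.

Lemma tt_ge0 k : (forall n, (1 <= n)%N -> 0 < d n) -> 0 <= tt d k.
Proof.
move=> d_gt0; rewrite /tt big_nat_cond; apply: sumr_ge0 => i /andP[/andP[i1 _] _].
exact/ltW/d_gt0.
Qed.

End Sequence.

Theorem lemma6p5 (R : realType) (V : lmodType R) (ip : V -> V -> R)
  (u : R -> V) (d : nat -> R)
  (Hip : is_inner_product ip) (Hcomplete : ip_complete ip)
  (Hu : forall s t : R, 0 <= s -> 0 <= t -> ip (u s) (u t) = expR (- ((s - t) ^+ 2)))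
  (Hdpos : forall n : nat, (1 <= n)%N -> 0 < d n)
  (Hdsq : cvgn [sequence \sum_(1 <= k < n) (d k ^+ 2)]_n)
  (Ht : tt d @ \oo --> +oo)
  (Hd1 : d 1%N <= 1 / 8)
  (Hdrec : forall n : nat, (1 <= n)%N -> d n.+1 <= d n / (1 + 64 * d n ^+ 2))
  (n : nat) (Hn : (1 <= n)%N) (I : {set 'I_n}) (HI : I != finset.set0) :
  let delta := \big[Num.max/0]_(i in I) \big[Num.max/0]_(j in I)
                 `|tt d i.+1 - tt d j.+1| in
  #|I|%:R / n%:R * rho_inf d * expR (- (delta ^+ 2) / 2)
    <= ipnorm ip (n%:R^-1 *: \sum_(k < n) xx u d k.+1)
  /\ 0 < #|I|%:R / n%:R * rho_inf d * expR (- (delta ^+ 2) / 2).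
Proof.
move=> delta; set e := expR _.
have rho_inf_gt0 : 0 < rho_inf d by exact: expR_gt0.
have gram k l : ip (xx u d k) (xx u d l)
    = rho d k * rho d l * expR (- ((tt d k - tt d l) ^+ 2)).
  by rewrite /xx ipZl // ipZr // Hu ?tt_ge0 // mulrA.
have norm_ge : #|I|%:R * (rho_inf d * e) <= ipnorm ip (\sum_(k < n) xx u d k.+1).
  apply: (ipnorm_sum_ge Hip) => [|k l|k l kI lI]; rewrite ?gram.
  - by rewrite mulr_ge0 ?expR_ge0 ?ltW.
  - by rewrite !mulr_ge0 ?expR_ge0 ?ltW ?rho_gt0.
  - rewrite exprMn expr2; apply: ler_pM.
    + by rewrite mulr_ge0 // ltW.
    + exact: sqr_ge0.
    + by apply: ler_pM; rewrite ?rho_inf_le_rho // ltW.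
    + exact/expR_half_sqr_le/(le_bigmax2_cond _ (fun i j : 'I_n => _) kI lI).
split.
- rewrite ipnormZ // ger0_norm ?invr_ge0 //.
  by rewrite -!mulrA mulrCA; apply: ler_wpM2l; rewrite ?invr_ge0.
- rewrite mulr_gt0 ?expR_gt0 // mulr_gt0 // mulr_gt0 ?invr_gt0 ?ltr0n //.
  by rewrite card_gt0.
Qed.
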